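(* Suppose Assumptions (A1), (A2) and (LIN) hold, $f$ is Lipschitz continuous with constant $L_f$, and $x\in\mathcal{X}$ is such that $y^*(x)$ is a single point. Then $$|\widetilde\phi_t(x)-\phi(x)|\le L_f\,\frac{kt}{\tau(x)\,\|\nabla_y g(x,y^*(x))\|}\quad\text{for all }t>0,$$ where $\tau(x):=\inf_{y\in\mathcal{Y}(x),\,y\neq y^*(x)}\cos\angle\big(\nabla_y g(x,y^*(x)),\,y-y^*(x)\big)>0$.
   Context: Let $f,g,h_1,\dots,h_k:\mathbb{R}^n\times\mathbb{R}^m\to\mathbb{R}$ and $\mathcal{X}\subseteq\mathbb{R}^n$. For $x\in\mathcal{X}$ let $\mathcal{Y}(x)=\{y: h_i(x,y)\le 0,\ i=1,\dots,k\}$, $y^*(x)=\arg\min_{y\in\mathcal{Y}(x)} g(x,y)$, and $\phi(x)=\min_{y\in y^*(x)} f(x,y)$. For $t>0$ let $\widetilde g_t(x,y)=g(x,y)-t\sum_{i=1}^k\log(-h_i(x,y))$ (defined when all $h_i(x,y)<0$), $y_t^*(x)=\arg\min_y\widetilde g_t(x,y)$ and $\widetilde\phi_t(x)=f(x,y_t^*(x))$. The cosine of the angle between vectors $u,v$ is $\langle u,v\rangle/(\|u\|\|v\|)$. Assumptions: (A1) $f$ is once and $g,h_i$ are twice continuously differentiable; (A2) $\mathcal{X}$ is convex and compact and for every $x\in\mathcal{X}$ there is $y$ with $h_i(x,y)<0$ for all $i$; (LIN) for every $x\in\mathcal{X}$, $g(x,\cdot)$ and all $h_i(x,\cdot)$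 are linear (affine) in $y$ and $\mathcal{Y}(x)$ is compact. *)

From HB Require Import structures.
From mathcomp Require Import all_boot all_order all_algebra.
From mathcomp Require Import all_classical all_reals all_analysis.
Set Implicit Arguments. Unset Strict Implicit. Unset Printing Implicit Defensive.
Import Order.TTheory GRing.Theory Num.Theory.
Import numFieldNormedType.Exports.
Local Open Scope classical_set_scope.
Local Open Scope ring_scope.

Section Defs.
Variable R : realType.

Definition dotv N (u v : 'rV[R]_N) : R := \sum_(j < N) u 0 j * v 0 j.
Definition enorm N (u : 'rV[R]_N) : R := Num.sqrt (dotv u u).
Definition cosang N (u v : 'rV[R]_N) : R := dotv u v / (enorm u * enorm v).

Definition evec N (i : 'I_N) : 'rV[R]_N := delta_mx 0 i.

Definition C1 N (F : 'rV[R]_N -> R) : Prop :=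
  forall i : 'I_N, (forall z, derivable F z (evec i)) /\
                   continuous (fun z => 'D_(evec i) F z).
Definition C2 N (F : 'rV[R]_N -> R) : Prop :=
  C1 F /\ forall i : 'I_N, C1 (fun z => 'D_(evec i) F z).

(* a function of (x,y) in R^n x R^m, seen as a function on R^(n+m) *)
Definition joint n m (F : 'rV[R]_n -> 'rV[R]_m -> R) : 'rV[R]_(n + m) -> R :=
  fun z => F (lsubmx z) (rsubmx z).

Definition grad_y n m (F : 'rV[R]_n -> 'rV[R]_m -> R) x y : 'rV[R]_m :=
  \row_(j < m) 'D_(evec j) (F x) y.

Definition affine_fun m (F : 'rV[R]_m -> R) : Prop :=
  exists (a : 'rV[R]_m) (c : R), forall y, F y = c + dotv a y.

Definition lipschitz_xy n m (F : 'rV[R]_n -> 'rV[R]_m -> R) (L : R) : Prop :=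
  forall x y x' y',
    `|F x y - F x' y'| <= L * Num.sqrt (enorm (x - x') ^+ 2 + enorm (y - y') ^+ 2).

Variables (n m k : nat).
Variables (f g : 'rV[R]_n -> 'rV[R]_m -> R) (h : 'I_k -> 'rV[R]_n -> 'rV[R]_m -> R).

Definition Yset x : set 'rV[R]_m := [set y | forall i, h i x y <= 0].
Definition ystar x : set 'rV[R]_m :=
  [set y | Yset x y /\ forall z, Yset x z -> g x y <= g x z].
Definition phi x : R := inf [set f x y | y in ystar x].
(* log-barrier function, on its domain (all h_i < 0) *)
Definition strict_feas x : set 'rV[R]_m := [set y | forall i, h i x y < 0].
Definition gbar (t : R) x y : R := g x y - t * \sum_(i < k) ln (- h i x y).
Definition ystar_t (t : R) x : set 'rV[R]_m :=
  [set y | strict_feas x y /\ forall z, strict_feas x z -> gbar t x y <= gbar t x z].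
(* tau(x) for a point y0 (= the unique element of y^*(x)) *)
Definition tau x (y0 : 'rV[R]_m) : R :=
  inf [set cosang (grad_y g x y0) (y - y0) | y in Yset x `\ y0].

End Defs.

From HB Require Import structures.
From mathcomp Require Import all_boot all_order all_algebra.
From mathcomp Require Import all_classical all_reals all_analysis.
From mathcomp Require Import ring lra.
Set Implicit Arguments. Unset Strict Implicit. Unset Printing Implicit Defensive.
Import Order.TTheory GRing.Theory Num.Theory.
Import numFieldNormedType.Exports.
Local Open Scope classical_set_scope.
Local Open Scope ring_scope.

(* Under (LIN), g(x,.) = c + a.y and Y(x) is a compact polyhedron, so a is the
   gradient of g(x,.) and y0 is the unique minimiser of a.y over Y(x).

   Comparing the barrier objective at y_t with its value at the point
   (1 - s) y_t + s y0, convexity and ln (1 + u) <= u give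
   s a.(y_t - y0) <= k t s / (1 - s) for every s in (0, 1), hence the duality
   gap bound a.(y_t - y0) <= k t, without differentiating the barrier.

   Near y0 the inactive constraints stay inactive, so every y in Y(x) can be
   pulled radially to distance e from y0 without leaving Y(x).  Minimising
   a.(y - y0) over the compact set Y(x) /\ {|y - y0| = e} therefore bounds the
   cosines from below by a positive number: tau(x) > 0.  Then
   tau |a| |y_t - y0| <= a.(y_t - y0) <= k t, and the Lipschitz continuity of f
   finishes the proof because phi(x) = f(x, y0). *)

Section Euclidean.
Variables (R : realType) (m : nat).
Implicit Types (a u v : 'rV[R]_m).

Lemma dotvDr a u v : dotv a (u + v) = dotv a u + dotv a v.
Proof. by rewrite /dotv -big_split; apply: eq_bigr => j _; rewrite mxE mulrDr. Qed.

Lemma dotvBr a u v : dotv a (u - v) = dotv a u - dotv a v.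
Proof. by rewrite /dotv -sumrB; apply: eq_bigr => j _; rewrite !mxE mulrBr. Qed.

Lemma dotvZr a c u : dotv a (c *: u) = c * dotv a u.
Proof. by rewrite /dotv mulr_sumr; apply: eq_bigr => j _; rewrite mxE mulrCA. Qed.

Lemma dotvZl a c u : dotv (c *: a) u = c * dotv a u.
Proof. by rewrite /dotv mulr_sumr; apply: eq_bigr => j _; rewrite mxE mulrA. Qed.

Lemma dotv0l u : dotv 0 u = 0.
Proof. by rewrite /dotv big1 // => j _; rewrite mxE mul0r. Qed.

Lemma dotv0r u : dotv u 0 = 0.
Proof. by rewrite /dotv big1 // => j _; rewrite mxE mulr0. Qed.

Lemma dotv_evec a j : dotv a (evec R j) = a 0 j.
Proof.
rewrite /dotv (bigD1 j) //= big1 ?addr0; first by rewrite /evec mxE !eqxx mulr1.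
by move=> i /negbTE ij; rewrite /evec mxE eqxx ij mulr0.
Qed.

Lemma dotvv_ge0 u : 0 <= dotv u u.
Proof. by apply: sumr_ge0 => j _; rewrite -expr2 sqr_ge0. Qed.

Lemma dotvv_eq0 u : (dotv u u == 0) = (u == 0).
Proof.
apply/idP/eqP => [|->]; last by rewrite dotv0l.
rewrite psumr_eq0 => [/allP u0|j _]; last by rewrite -expr2 sqr_ge0.
apply/rowP => j; have := u0 j (mem_index_enum j).
by rewrite mulf_eq0 orbb mxE => /eqP.
Qed.

Lemma enorm_ge0 u : 0 <= enorm u.
Proof. exact: sqrtr_ge0. Qed.

Lemma enorm_eq0 u : (enorm u == 0) = (u == 0).
Proof. by rewrite /enorm sqrtr_eq0 le_eqVlt ltNge dotvv_ge0 orbF dotvv_eq0. Qed.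

Lemma enorm0 : enorm (0 : 'rV[R]_m) = 0.
Proof. by apply/eqP; rewrite enorm_eq0. Qed.

Lemma enorm_gt0 u : (0 < enorm u) = (u != 0).
Proof. by rewrite lt_neqAle enorm_ge0 andbT eq_sym enorm_eq0. Qed.

Lemma enormZ c u : enorm (c *: u) = `|c| * enorm u.
Proof.
by rewrite /enorm dotvZr dotvZl mulrA -expr2 sqrtrM ?sqr_ge0 // sqrtr_sqr.
Qed.

Lemma enorm_evec (j : 'I_m) : enorm (evec R j) = 1.
Proof. by rewrite /enorm dotv_evec /evec mxE !eqxx sqrtr1. Qed.

Lemma normr_coord_le u j : `|u 0 j| <= enorm u.
Proof.
rewrite /enorm -sqrtr_sqr ler_sqrt ?dotvv_ge0 // /dotv (bigD1 j) //= -expr2.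
by rewrite lerDl; apply: sumr_ge0 => i _; rewrite -expr2 sqr_ge0.
Qed.

Lemma normr_dotv_le a u : `|dotv a u| <= (\sum_j `|a 0 j|) * enorm u.
Proof.
rewrite /dotv mulr_suml; apply: le_trans (ler_norm_sum _ _ _) _.
by apply: ler_sum => j _; rewrite normrM ler_wpM2l ?normr_coord_le.
Qed.

Lemma enorm_rescale e v : 0 <= e -> v != 0 -> enorm ((e / enorm v) *: v) = e.
Proof.
rewrite -enorm_gt0 => e0 v0.
by rewrite enormZ ger0_norm ?divr_ge0 ?enorm_ge0 // mulfVK ?gt_eqF.
Qed.

Lemma dotv_cosang u v : u != 0 -> v != 0 ->
  dotv u v = cosang u v * (enorm u * enorm v).
Proof.
by rewrite -!enorm_gt0 => u0 v0; rewrite /cosang mulfVK // mulf_neq0 ?gt_eqF.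
Qed.

Lemma cosangZr u v l : 0 < l -> cosang u (l *: v) = cosang u v.
Proof.
move=> l0; rewrite /cosang dotvZr enormZ gtr0_norm // mulrCA invfM mulrA.
by rewrite [l * _]mulrC mulfK ?gt_eqF.
Qed.

Lemma enorm_le_div_cosang a v (tau C : R) : 0 < tau -> a != 0 ->
  (v != 0 -> tau <= cosang a v) -> dotv a v <= C -> enorm v <= C / (tau * enorm a).
Proof.
move=> tau0 a0 cos_ge av_le; have a_gt0 : 0 < enorm a by rewrite enorm_gt0.
have [v0|v0] := eqVneq v 0.
  move: av_le; rewrite v0 enorm0 dotv0r => C0.
  by rewrite divr_ge0 // mulr_ge0 // ltW.
rewrite ler_pdivlMr ?mulr_gt0 //; apply: le_trans av_le.
have -> : enorm v * (tau * enorm a) = tau * (enorm a * enorm v) by ring.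
by rewrite dotv_cosang // ler_wpM2r ?mulr_ge0 ?enorm_ge0 ?cos_ge.
Qed.

End Euclidean.

Lemma continuous_sum (R : realType) (T : topologicalType) (I : Type)
    (r : seq I) (F : I -> T -> R) :
  (forall i, continuous (F i)) -> continuous (fun x => \sum_(i <- r) F i x).
Proof.
move=> Fc; elim: r => [|i r IHr] x.
  by under eq_fun do rewrite big_nil; exact: cst_continuous.
by under eq_fun do rewrite big_cons; exact: continuousD (Fc i x) (IHr x).
Qed.

Lemma continuous_dotv (R : realType) m (a : 'rV[R]_m) : continuous (dotv a).
Proof.
apply: continuous_sum => j x.
apply: continuousM; first exact: cst_continuous.
exact: coord_continuous.
Qed.

Lemma continuous_enorm (R : realType) m : continuous (@enorm R m).
Proof.
have dotvv_cont : continuous (fun u : 'rV[R]_m => dotv u u).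
  apply: continuous_sum => j x.
  by apply: continuousM; exact: coord_continuous.
by move=> u; exact: continuous_comp (dotvv_cont u) (@sqrt_continuous R _).
Qed.

Section Affine.
Variables (R : realType) (m : nat).
Implicit Types (F : 'rV[R]_m -> R) (y z : 'rV[R]_m).

Lemma affine_line F y z l : affine_fun F ->
  F (y + l *: (z - y)) = F y + l * (F z - F y).
Proof. by move=> [a [c HF]]; rewrite !HF dotvDr dotvZr dotvBr; ring. Qed.

Lemma affine_convex F : affine_fun F -> convex_function setT F.
Proof.
move=> [a [c HF]] t y z _ _; rewrite /= !HF dotvDr !dotvZr convRE /unstable.onem.
by rewrite le_eqVlt; apply/orP; left; apply/eqP; ring.
Qed.

Lemma derive_affine F a c y j : (forall y, F y = c + dotv a y) ->
  'D_(evec R j) F y = a 0 j.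
Proof.
move=> HF; apply: lim_near_cst; first exact: norm_hausdorff.
near=> s; have s0 : s != 0 by near: s; exact: nbhs_dnbhs_neq.
rewrite /= !HF dotvDr dotvZr dotv_evec.
have -> : c + (s * a 0 j + dotv a y) - (c + dotv a y) = s * a 0 j by ring.
by rewrite /GRing.scale /= mulKf.
Unshelve. all: by end_near.
Qed.

Lemma affine_family k (H : 'I_k -> 'rV[R]_m -> R) :
  (forall i, affine_fun (H i)) ->
  exists (b : 'I_k -> 'rV[R]_m) (c : 'I_k -> R),
    forall i y, H i y = c i + dotv (b i) y.
Proof.
move=> Haff.
have [bc Hbc] := choice (fun i => let: ex_intro a (ex_intro c Hac) := Haff i in
  ex_intro (fun p : 'rV[R]_m * R => forall y, H i y = p.2 + dotv p.1 y) (a, c) Hac).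
by exists (fun i => (bc i).1), (fun i => (bc i).2).
Qed.

End Affine.

Section Barrier.
Variable R : realType.

Lemma ln_sub_le_div_onem (p q s : R) : 0 < p -> 0 <= s < 1 -> (1 - s) * p <= q ->
  ln p - ln q <= s / (1 - s).
Proof.
move=> p0 /andP[s0 s1] qp; have s1' : 0 < 1 - s by rewrite subr_gt0.
have q0 : 0 < q by apply: lt_le_trans qp; rewrite mulr_gt0.
have pq0 : 0 < p / q by rewrite divr_gt0.
have pq_le : p / q <= (1 - s)^-1.
  by rewrite ler_pdivrMr // mulrC ler_pdivlMr // mulrC.
rewrite -ln_div ?posrE // -[p / q](subrKC 1) (le_trans (le_ln1Dx _)) //.
  lra.
have -> : s / (1 - s) = (1 - s)^-1 - 1 by field; rewrite gt_eqF.
by rewrite lerD2r.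
Qed.

Lemma le_of_mul_onem (D C : R) : 0 <= C ->
  (forall s, 0 < s < 1 -> D * (1 - s) <= C) -> D <= C.
Proof.
move=> C0 HD; rewrite leNgt; apply/negP => CD.
have D0 : 0 < D by apply: le_lt_trans CD.
pose s := (D - C) / (2 * D).
have s01 : 0 < s < 1.
  rewrite divr_gt0 ?subr_gt0 ?mulr_gt0 //= ltr_pdivrMr ?mulr_gt0 //; lra.
have := HD s s01.
have -> : D * (1 - s) = (D + C) / 2 by rewrite /s; field; rewrite gt_eqF.
rewrite ler_pdivrMr //; lra.
Qed.

Lemma convex_function_le m (F : 'rV[R]_m -> R) y z s :
  convex_function setT F -> 0 <= s -> s <= 1 ->
  F (s *: y + (1 - s) *: z) <= s * F y + (1 - s) * F z.
Proof.
by move=> Fc s0 s1; have := Fc (Itv01 s0 s1) y z (mem_set I) (mem_set I).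
Qed.

Lemma barrier_gap m k (G : 'rV[R]_m -> R) (H : 'I_k -> 'rV[R]_m -> R)
    (t : R) (yt y0 : 'rV[R]_m) :
  convex_function setT G -> (forall i, convex_function setT (H i)) -> 0 < t ->
  (forall i, H i yt < 0) -> (forall i, H i y0 <= 0) ->
  (forall z, (forall i, H i z < 0) ->
     G yt - t * \sum_i ln (- H i yt) <= G z - t * \sum_i ln (- H i z)) ->
  G yt - G y0 <= k%:R * t.
Proof.
move=> Gc Hc t0 Hyt Hy0 yt_min.
apply: le_of_mul_onem => [|s /andP[s0 s1]]; first by rewrite mulr_ge0 // ltW.
have s1' : 0 < 1 - s by rewrite subr_gt0.
pose z := s *: y0 + (1 - s) *: yt.
have Hz_ge i : (1 - s) * - H i yt <= - H i z.
  have := convex_function_le y0 yt (Hc i) (ltW s0) (ltW s1).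
  have := Hy0 i; nra.
have Hz_lt i : H i z < 0.
  have := Hz_ge i; have := Hyt i; nra.
pose w := s / (1 - s).
have ln_le i : ln (- H i yt) - ln (- H i z) <= w.
  by apply: ln_sub_le_div_onem; rewrite ?oppr_gt0 ?Hyt ?(ltW s0) ?s1 ?Hz_ge.
have sum_le : \sum_i ln (- H i yt) - \sum_i ln (- H i z) <= k%:R * w.
  rewrite -sumrB; apply: le_trans (ler_sum _ (fun i _ => ln_le i)) _.
  by rewrite sumr_const card_ord mulr_natl.
have Gz := convex_function_le y0 yt Gc (ltW s0) (ltW s1).
have gap : s * (G yt - G y0) <= t * (k%:R * w).
  have := yt_min z Hz_lt; have := ler_wpM2l (ltW t0) sum_le; lra.
have : s * ((G yt - G y0) * (1 - s)) <= s * (k%:R * t).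
  have -> : s * (k%:R * t) = t * (k%:R * w) * (1 - s).
    by rewrite /w; field; rewrite gt_eqF.
  by rewrite mulrA ler_wpM2r // ltW.
by rewrite ler_pM2l.
Qed.

End Barrier.

Lemma exists_pos_mul_lt (I : finType) (R : realType) (p q : I -> R) :
  (forall i, 0 < q i) -> exists2 e, 0 < e & forall i, e * p i < q i.
Proof.
move=> q0; have p1 i : 0 < `|p i| + 1 by rewrite ltr_wpDl.
pose rho i := q i / (`|p i| + 1).
have rho0 i : 0 < rho i by rewrite divr_gt0.
pose e := \big[Order.min/1]_i rho i.
have e0 : 0 < e by apply: lt_bigmin => // i _.
exists e => // i; have e_le : e <= rho i by exact: bigmin_le.
have rho_p : rho i * (`|p i| + 1) = q i by rewrite mulfVK ?gt_eqF.
apply: le_lt_trans (ler_wpM2l (ltW e0) (ler_norm (p i))) _.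
apply: le_lt_trans (ler_wpM2r (normr_ge0 _) e_le) _.
by rewrite -rho_p ltr_pM2l // ltrDl.
Qed.

Section Polyhedron.
Variables (R : realType) (m k : nat) (H : 'I_k -> 'rV[R]_m -> R).
Hypothesis H_affine : forall i, affine_fun (H i).
Local Notation P := [set y | forall i, H i y <= 0].

Lemma inactive_near y0 : exists2 e, 0 < e &
  forall d, enorm d <= e -> forall i, H i y0 < 0 -> H i (y0 + d) < 0.
Proof.
have [b [c Hbc]] := affine_family H_affine.
pose q i := if H i y0 < 0 then - H i y0 else 1.
have [|e e0 He] := @exists_pos_mul_lt _ _ (fun i => \sum_j `|b i 0 j|) q.
  by move=> i; rewrite /q; case: ifP => // Hi; rewrite oppr_gt0.
exists e => // d d_le i Hi; have := He i; rewrite /q Hi.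
rewrite !Hbc in Hi * => eB; rewrite dotvDr.
have B0 : 0 <= \sum_j `|b i 0 j| by rewrite sumr_ge0.
have := normr_dotv_le (b i) d; have := ler_norm (dotv (b i) d).
have := ler_wpM2l B0 d_le; lra.
Qed.

Lemma polyhedron_radial y0 : P y0 -> exists2 e, 0 < e &
  forall y, P y -> y != y0 -> P (y0 + (e / enorm (y - y0)) *: (y - y0)).
Proof.
move=> Py0; have [e e0 He] := inactive_near y0.
exists e => // y Py yy0 i; rewrite -subr_eq0 in yy0.
have [Hi|Hi] := ltP (H i y0) 0.
  by apply: ltW; apply: He => //; rewrite enorm_rescale // ltW.
have Hi0 : H i y0 = 0 by apply/le_anti; rewrite Py0 Hi.
rewrite affine_line // Hi0 subr0 add0r mulr_ge0_le0 //.
by rewrite divr_ge0 ?enorm_ge0 ?ltW.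
Qed.

Lemma polyhedron_exists_ne y0 : (0 < m)%N -> (exists ys, forall i, H i ys < 0) ->
  exists2 y, P y & y != y0.
Proof.
move=> m0 [ys Hys]; have [ys_y0|ys_y0] := eqVneq ys y0; last first.
  by exists ys => // i; exact: ltW.
have [e e0 He] := inactive_near y0.
pose d := e *: evec R (Ordinal m0).
have d_norm : enorm d = e by rewrite enormZ enorm_evec mulr1 gtr0_norm.
exists (y0 + d).
  by move=> i; apply: ltW; apply: He; rewrite ?d_norm // -ys_y0.
by rewrite -subr_eq0 addrAC subrr add0r -enorm_eq0 d_norm gt_eqF.
Qed.

Lemma polyhedron_cosang_lb (a y0 : 'rV[R]_m) : compact P -> P y0 ->
  (exists2 y, P y & y != y0) ->
  (forall y, P y -> y != y0 -> dotv a y0 < dotv a y) ->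
  exists2 d, 0 < d & forall y, P y -> y != y0 -> d <= cosang a (y - y0).
Proof.
move=> P_compact Py0 [y1 Py1 y1y0] y0_min; have [e e0 He] := polyhedron_radial Py0.
pose rad y := y0 + (e / enorm (y - y0)) *: (y - y0).
have rad_sub y : rad y - y0 = (e / enorm (y - y0)) *: (y - y0).
  by rewrite /rad addrAC subrr add0r.
have rad_norm y : y != y0 -> enorm (rad y - y0) = e.
  by move=> yy0; rewrite rad_sub enorm_rescale ?subr_eq0 // ltW.
have shift_cont (F : 'rV[R]_m -> R) :
    continuous F -> continuous (fun y : 'rV[R]_m => F (y - y0)).
  move=> Fc y; have sub_cont : {for y, continuous (fun z : 'rV[R]_m => z - y0)}.
    by apply: continuousB => //; exact: cst_continuous.
  exact: continuous_comp sub_cont (Fc _).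
pose S := P `&` (fun y => enorm (y - y0)) @^-1` [set e].
have Sc : compact S.
  apply: compact_closedI P_compact _.
  apply: preimage_closed; last exact: closed_eq.
  by move=> y _; exact: shift_cont (@continuous_enorm R m) y.
have S_ne : S !=set0 by exists (rad y1); split; [exact: He | exact: rad_norm].
have [c /set_mem [Pc c_norm] c_min] :=
  EVT_min_rV S_ne Sc (continuous_subspaceT (shift_cont _ (@continuous_dotv R m a))).
have cy0 : c != y0 by rewrite -subr_eq0 -enorm_eq0 c_norm gt_eqF.
have mu0 : 0 < dotv a (c - y0) by rewrite dotvBr subr_gt0 y0_min.
have a0 : 0 < enorm a.
  by rewrite enorm_gt0; apply: contraTneq mu0 => ->; rewrite dotv0l ltxx.
exists (dotv a (c - y0) / (enorm a * e)) => [|y Py yy0].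
  by rewrite divr_gt0 // mulr_gt0.
have l0 : 0 < e / enorm (y - y0) by rewrite divr_gt0 // enorm_gt0 subr_eq0.
rewrite -(cosangZr _ _ l0) -rad_sub /cosang rad_norm //.
rewrite ler_pM2r ?invr_gt0 ?mulr_gt0 //; apply: c_min; rewrite inE.
by split; [exact: He | exact: rad_norm].
Qed.

End Polyhedron.

Section Lipschitz.
Variables (R : realType) (n m : nat) (F : 'rV[R]_n -> 'rV[R]_m -> R) (L : R).
Hypothesis F_lip : lipschitz_xy F L.

Lemma lipschitz_xy_y x y y' : `|F x y - F x y'| <= L * enorm (y - y').
Proof.
have := F_lip x y x y'.
by rewrite subrr enorm0 expr0n /= add0r sqrtr_sqr (ger0_norm (enorm_ge0 _)).
Qed.

Lemma lipschitz_xy_ge0 (y y' : 'rV[R]_m) : y != y' -> 0 <= L.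
Proof.
rewrite -subr_eq0 -enorm_gt0 => yy'; have := lipschitz_xy_y 0 y y'.
by move=> /(le_trans (normr_ge0 _)); rewrite pmulr_lge0.
Qed.

End Lipschitz.

Section LowerLevel.
Variables (R : realType) (n m k : nat).
Variables (g : 'rV[R]_n -> 'rV[R]_m -> R) (h : 'I_k -> 'rV[R]_n -> 'rV[R]_m -> R).
Variables (x : 'rV[R]_n) (y0 : 'rV[R]_m).

Lemma ystar1_affine_lt a c : (forall y, g x y = c + dotv a y) ->
  ystar g h x = [set y0] ->
  forall y, Yset h x y -> y != y0 -> dotv a y0 < dotv a y.
Proof.
move=> g_eq Hy0 y Yy; have [_ y0_min] : ystar g h x y0 by rewrite Hy0.
rewrite ltNge; apply: contra => a_le; have : ystar g h x y.
  by split => // z Yz; apply: le_trans (y0_min z Yz); rewrite !g_eq lerD2l.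
by rewrite Hy0 => ->.
Qed.

Lemma tau_bounds d : 0 < d -> (exists2 y, Yset h x y & y != y0) ->
  (forall y, Yset h x y -> y != y0 -> d <= cosang (grad_y g x y0) (y - y0)) ->
  0 < tau g h x y0 /\
  forall y, Yset h x y -> y != y0 ->
    tau g h x y0 <= cosang (grad_y g x y0) (y - y0).
Proof.
move=> d_gt0 [y1 Yy1 y1_ne] d_le.
have d_lb : lbound [set cosang (grad_y g x y0) (y - y0) | y in Yset h x `\ y0] d.
  by move=> _ [y [Yy /eqP yy0] <-]; exact: d_le.
split=> [|y Yy /eqP yy0]; last by apply: ge_inf; [exists d | exists y].
apply: lt_le_trans d_gt0 (lb_le_inf _ d_lb).
by exists (cosang (grad_y g x y0) (y1 - y0)), y1 => //; split => //; apply/eqP.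
Qed.

End LowerLevel.

Unset Implicit Arguments.

Theorem theorem2 (R : realType) (n m k : nat) (mpos : (0 < m)%N)
  (f g : 'rV[R]_n -> 'rV[R]_m -> R) (h : 'I_k -> 'rV[R]_n -> 'rV[R]_m -> R)
  (X : set 'rV[R]_n)
  (* (A1) *)
  (Hf1 : C1 (joint f)) (Hg2 : C2 (joint g)) (Hh2 : forall i, C2 (joint (h i)))
  (* (A2) *)
  (HXconv : convex_set X) (HXcomp : compact X)
  (Hslater : forall x, X x -> exists y, forall i, h i x y < 0)
  (* (LIN) *)
  (Hlin : forall x, X x ->
     [/\ affine_fun (g x), forall i, affine_fun (h i x) & compact (Yset h x)])
  (Lf : R) (Hlip : lipschitz_xy f Lf)
  (x : 'rV[R]_n) (Hx : X x) (y0 : 'rV[R]_m) (Hy0 : ystar g h x = [set y0]) :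
  0 < tau g h x y0 /\
  forall t : R, 0 < t -> forall yt, ystar_t g h t x yt ->
    `|f x yt - phi f g h x| <=
      Lf * ((k%:R * t) / (tau g h x y0 * enorm (grad_y g x y0))).
Proof.
have [g_aff h_aff Y_compact] := Hlin x Hx; have [a [c g_eq]] := g_aff.
have grad_a : grad_y g x y0 = a.
  by apply/rowP => j; rewrite mxE (derive_affine _ _ g_eq).
have [Yy0 _] : ystar g h x y0 by rewrite Hy0.
have y0_unique := ystar1_affine_lt g_eq Hy0.
have Y_ne := polyhedron_exists_ne h_aff y0 mpos (Hslater x Hx).
have [y1 Yy1 y1_ne] := Y_ne.
have [d d_gt0 d_le] := polyhedron_cosang_lb h_aff Y_compact Yy0 Y_ne y0_unique.
rewrite -grad_a in d_le; have [tau_gt0 tau_le] := tau_bounds d_gt0 Y_ne d_le.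
split => // t t_gt0 yt [yt_feas yt_min].
have gap : dotv (grad_y g x y0) (yt - y0) <= k%:R * t.
  have := barrier_gap (affine_convex g_aff) (fun i => affine_convex (h_aff i))
    t_gt0 yt_feas Yy0 yt_min.
  by rewrite grad_a !g_eq dotvBr; lra.
rewrite /phi Hy0 image_set1 inf1.
apply: le_trans (lipschitz_xy_y Hlip x yt y0) _.
rewrite ler_wpM2l ?(lipschitz_xy_ge0 Hlip y1_ne) //.
apply: enorm_le_div_cosang gap => //.
  rewrite grad_a; apply: contraTneq (y0_unique _ Yy1 y1_ne) => ->.
  by rewrite !dotv0l ltxx.
by rewrite subr_eq0 => ytne; apply: tau_le => // i; exact: ltW.
Qed.
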